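(* If an atomic flow $A$ is normal for $\mathsf c$ and $A\to_{\mathsf w}^\star B$, then $B$ is normal for $\mathsf c$.
   Context: An atomic flow is a tuple $(V,E,\eta,up,lo)$: finite sets of vertices and edges, a labelling of vertices by interaction, cut, weakening, coweakening, contraction or cocontraction, and maps $up:E\to V\cup\{\top\}$, $lo:E\to V\cup\{\bot\}$. Upper edges of $\nu$: $lo(\epsilon)=\nu$; lower edges: $up(\epsilon)=\nu$. (Upper, lower) edge numbers: $(0,2)$ interaction, $(2,0)$ cut, $(0,1)$ weakening, $(1,0)$ coweakening, $(2,1)$ contraction, $(1,2)$ cocontraction; no directed cycles; there is $\pi:E\to\{+,-\}$ giving all edges of a (co)contraction the same sign and the two edges of an interaction/cut different signs. A flow is normal for $\mathsf c$ if none of the following patterns occurs in it: a contraction whose lower edge is an upper edge of a cut; an interaction one of whose lower edges is the upper edge of a cocontraction; a contraction whose lower edge is the upper edge of a cocontraction. $\to_{\mathsf w}^\star$ is the reflexive-transitive closure of $\to_{\mathsf w}$, where $A\to_{\mathsf w}B$ means $B$ results from $A$ by one of these subgraph replacements: (i) a weakening whose lower edge is an upper edge of a contraction: delete both, merging the contraction's other upper edge and its lower edge into one edge; (ii) a coweakening whose upper edge is a lower edge of a cocontraction: delete both, merging the cocontraction's upper edge and other lower edge; (iii) a weakening whose lower edge is an upper edge of a cut: delete both, the cut's other upper edge becoming the upper edge of a new coweakening; (iv) an interaction one of whose lower edges is the upper edge of a coweakening: delete both, the other lower edge becoming the lower edge of a new weakening; (v) an edge from a weakening to a coweakening: delete it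 and both vertices; (vi) a weakening whose lower edge is the upper edge of a cocontraction: replace by two new weakenings whose lower edges are the cocontraction's lower edges; (vii) a coweakening whose upper edge is the lower edge of a contraction: replace by two new coweakenings whose upper edges are the contraction's upper edges. *)

From mathcomp Require Import all_boot.
From Stdlib Require Import Relations.

Set Implicit Arguments.
Unset Strict Implicit.
Unset Printing Implicit Defensive.

Inductive kind := Int | Cut | Wk | Cowk | Ctr | Coctr.

(* Number of upper edges (lo e = v) and lower edges (up e = v) of each kind. *)
Definition n_upper (k : kind) : nat :=
  match k with Int => 0 | Cut => 2 | Wk => 0 | Cowk => 1 | Ctr => 2 | Coctr => 1 end.
Definition n_lower (k : kind) : nat :=
  match k with Int => 2 | Cut => 0 | Wk => 1 | Cowk => 0 | Ctr => 1 | Coctr => 2 end.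

(* A (pre)flow: vertex names, edge names, labelling, and the maps up, lo.
   [up e = None] means up(e) = top, [lo e = None] means lo(e) = bottom.
   Only the values of [lab] on [fV] and of [up], [lo] on [fE] are meaningful. *)
Record flow := Flow {
  fV : seq nat;
  fE : seq nat;
  lab : nat -> kind;
  up : nat -> option nat;
  lo : nat -> option nat }.

Definition vedge (A : flow) (v w : nat) : Prop :=
  exists e, e \in fE A /\ up A e = Some v /\ lo A e = Some w.

Definition is_flow (A : flow) : Prop :=
  [/\ uniq (fV A) /\ uniq (fE A),
    (forall e v, e \in fE A ->
        (up A e = Some v -> v \in fV A) /\ (lo A e = Some v -> v \in fV A)),
    (forall v, v \in fV A ->
        count (fun e => lo A e == Some v) (fE A) = n_upper (lab A v) /\
        count (fun e => up A e == Some v) (fE A) = n_lower (lab A v)),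
    (forall v, ~ clos_trans nat (vedge A) v v) &
    (exists pi : nat -> bool,
      forall v, v \in fV A ->
      [/\ (lab A v = Ctr \/ lab A v = Coctr) ->
            forall e1 e2, e1 \in fE A -> e2 \in fE A ->
            (up A e1 = Some v \/ lo A e1 = Some v) ->
            (up A e2 = Some v \/ lo A e2 = Some v) -> pi e1 = pi e2,
          lab A v = Int ->
            forall e1 e2, e1 \in fE A -> e2 \in fE A -> e1 <> e2 ->
            up A e1 = Some v -> up A e2 = Some v -> pi e1 <> pi e2 &
          lab A v = Cut ->
            forall e1 e2, e1 \in fE A -> e2 \in fE A -> e1 <> e2 ->
            lo A e1 = Some v -> lo A e2 = Some v -> pi e1 <> pi e2])].

Definition normal_c (A : flow) : Prop :=
  ~ exists v w e, [/\ v \in fV A /\ w \in fV A, e \in fE A,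
      up A e = Some v, lo A e = Some w &
      [\/ lab A v = Ctr /\ lab A w = Cut,
          lab A v = Int /\ lab A w = Coctr
        | lab A v = Ctr /\ lab A w = Coctr]].

Definition flow_eq (A B : flow) : Prop :=
  [/\ fV A =i fV B, fE A =i fE B,
      (forall v, v \in fV A -> lab A v = lab B v),
      (forall e, e \in fE A -> up A e = up B e) &
      (forall e, e \in fE A -> lo A e = lo B e)].

Definition drop_all (s r : seq nat) : seq nat := [seq x <- r | x \notin s].

(* The seven replacement rules.  Kept vertices/edges keep their names and data;
   new vertices/edges get arbitrary fresh names. *)
Definition wstep_raw (A B : flow) : Prop :=
  (* (i) weakening w above a contraction k: merge k's other upper edge f
         and its lower edge g into a new edge h *)
  (exists w k e f g h,
     ( w \in fV A /\ k \in fV A /\ lab A w = Wk /\ lab A k = Ctr /\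
         e \in fE A /\ up A e = Some w /\ lo A e = Some k /\
         f \in fE A /\ f <> e /\ lo A f = Some k /\
         ( g \in fE A /\ up A g = Some k /\
             h \notin drop_all [:: e; f; g] (fE A) /\
             flow_eq B (Flow (drop_all [:: w; k] (fV A))
                             (h :: drop_all [:: e; f; g] (fE A))
                             (lab A)
                             (fun x => if x == h then up A f else up A x)
                             (fun x => if x == h then lo A g else lo A x))))) \/
  (* (ii) coweakening w below a cocontraction k *)
  (exists w k e f g h,
     ( w \in fV A /\ k \in fV A /\ lab A w = Cowk /\ lab A k = Coctr /\
         e \in fE A /\ up A e = Some k /\ lo A e = Some w /\
         f \in fE A /\ lo A f = Some k /\
         ( g \in fE A /\ g <> e /\ up A g = Some k /\
             h \notin drop_all [:: e; f; g] (fE A) /\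
             flow_eq B (Flow (drop_all [:: w; k] (fV A))
                             (h :: drop_all [:: e; f; g] (fE A))
                             (lab A)
                             (fun x => if x == h then up A f else up A x)
                             (fun x => if x == h then lo A g else lo A x))))) \/
  (* (iii) weakening w above a cut k: k's other upper edge f now ends in a
           new coweakening n *)
  (exists w k e f n,
     ( w \in fV A /\ k \in fV A /\ lab A w = Wk /\ lab A k = Cut /\
         e \in fE A /\ up A e = Some w /\ lo A e = Some k /\
         f \in fE A /\ f <> e /\ lo A f = Some k /\
         n \notin drop_all [:: w; k] (fV A) /\
         flow_eq B (Flow (n :: drop_all [:: w; k] (fV A))
                         (drop_all [:: e] (fE A))
                         (fun x => if x == n then Cowk else lab A x)
                         (up A)
                         (fun x => if x == f then Some n else lo A x)))) \/
  (* (iv) interaction i above a coweakening k: i's other lower edge f now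
          starts at a new weakening n *)
  (exists i k e f n,
     ( i \in fV A /\ k \in fV A /\ lab A i = Int /\ lab A k = Cowk /\
         e \in fE A /\ up A e = Some i /\ lo A e = Some k /\
         f \in fE A /\ f <> e /\ up A f = Some i /\
         n \notin drop_all [:: i; k] (fV A) /\
         flow_eq B (Flow (n :: drop_all [:: i; k] (fV A))
                         (drop_all [:: e] (fE A))
                         (fun x => if x == n then Wk else lab A x)
                         (fun x => if x == f then Some n else up A x)
                         (lo A)))) \/
  (exists w k e,
     ( w \in fV A /\ k \in fV A /\ lab A w = Wk /\ lab A k = Cowk /\
         e \in fE A /\ up A e = Some w /\ lo A e = Some k /\
         flow_eq B (Flow (drop_all [:: w; k] (fV A))
                         (drop_all [:: e] (fE A))
                         (lab A) (up A) (lo A)))) \/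
  (* (vi) weakening w above a cocontraction k with lower edges f, g:
          two new weakenings n1, n2 *)
  (exists w k e f g n1 n2,
     ( w \in fV A /\ k \in fV A /\ lab A w = Wk /\ lab A k = Coctr /\
         e \in fE A /\ up A e = Some w /\ lo A e = Some k /\
         f \in fE A /\ g \in fE A /\
         ( f <> g /\ up A f = Some k /\ up A g = Some k /\
             n1 <> n2 /\ n1 \notin drop_all [:: w; k] (fV A) /\
             n2 \notin drop_all [:: w; k] (fV A) /\
             flow_eq B (Flow (n1 :: n2 :: drop_all [:: w; k] (fV A))
                             (drop_all [:: e] (fE A))
                             (fun x => if x == n1 then Wk
                                       else if x == n2 then Wk else lab A x)
                             (fun x => if x == f then Some n1
                                       else if x == g then Some n2 else up A x)
                             (lo A))))) \/
  (* (vii) coweakening w below a contraction k with upper edges f, g: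
           two new coweakenings n1, n2 *)
  (exists w k e f g n1 n2,
     ( w \in fV A /\ k \in fV A /\ lab A w = Cowk /\ lab A k = Ctr /\
         e \in fE A /\ up A e = Some k /\ lo A e = Some w /\
         f \in fE A /\ g \in fE A /\
         ( f <> g /\ lo A f = Some k /\ lo A g = Some k /\
             n1 <> n2 /\ n1 \notin drop_all [:: w; k] (fV A) /\
             n2 \notin drop_all [:: w; k] (fV A) /\
             flow_eq B (Flow (n1 :: n2 :: drop_all [:: w; k] (fV A))
                             (drop_all [:: e] (fE A))
                             (fun x => if x == n1 then Cowk
                                       else if x == n2 then Cowk else lab A x)
                             (up A)
                             (fun x => if x == f then Some n1
                                       else if x == g then Some n2 else lo A x))))).

Definition wstep (A B : flow) : Prop := [/\ is_flow A, is_flow B & wstep_raw A B].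

Definition wstar : relation flow := clos_refl_trans flow wstep.

(* None of the seven rewrite rules can create a c-redex.  The redexes
   (contraction/interaction above cut/cocontraction) never involve a
   (co)weakening, and every vertex a rule creates is a (co)weakening; edges
   redirected to such a vertex therefore cannot be redexes.  The only other
   new edges are the merged edges of rules (i) and (ii): the merged edge of
   (i) ends where the lower edge of a contraction ended, that of (ii) starts
   where the upper edge of a cocontraction started, and a contraction is a
   redex source, a cocontraction a redex target, for every partner. *)
From mathcomp Require Import all_boot.
From Stdlib Require Import Relations.

Set Implicit Arguments.
Unset Strict Implicit.
Unset Printing Implicit Defensive.

Definition c_redex (k1 k2 : kind) : bool :=
  match k1, k2 with
  | Ctr, Cut | Int, Coctr | Ctr, Coctr => true
  | _, _ => false
  end.

Definition weak_kind (k : kind) : bool := if k is (Wk | Cowk) then true else false.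

Lemma c_redexP k1 k2 :
  reflect [\/ k1 = Ctr /\ k2 = Cut, k1 = Int /\ k2 = Coctr | k1 = Ctr /\ k2 = Coctr]
          (c_redex k1 k2).
Proof.
by apply: (iffP idP); [case: k1; case: k2 => //= _; constructor | by case=> -[-> ->]].
Qed.

Lemma c_redex_weakl k1 k2 : weak_kind k1 -> ~~ c_redex k1 k2.
Proof. by case: k1. Qed.

Lemma c_redex_weakr k1 k2 : weak_kind k2 -> ~~ c_redex k1 k2.
Proof. by case: k1; case: k2. Qed.

Lemma c_redex_Ctrl k1 k2 : c_redex k1 k2 -> c_redex Ctr k2.
Proof. by case: k1; case: k2. Qed.

Lemma c_redex_Coctrr k1 k2 : c_redex k1 k2 -> c_redex k1 Coctr.
Proof. by case: k1; case: k2. Qed.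

Lemma normal_cP (A : flow) :
  normal_c A <->
  (forall v w e, v \in fV A -> w \in fV A -> e \in fE A ->
     up A e = Some v -> lo A e = Some w -> ~~ c_redex (lab A v) (lab A w)).
Proof.
split=> [nA v w e Hv Hw He Ue Le | nA [v [w [e [[Hv Hw] He Ue Le /c_redexP]]]]].
- by apply/negP=> /c_redexP red; apply: nA; exists v, w, e.
- by apply/negP; apply: nA Ue Le.
Qed.

Lemma normal_c_flow_eq (B C : flow) : flow_eq B C -> normal_c C -> normal_c B.
Proof.
move=> [EV EE Elab Eup Elo] /normal_cP nC; apply/normal_cP=> v w e Hv Hw He Ue Le.
rewrite !Elab //; apply: nC (_ : up C e = Some v) (_ : lo C e = Some w).
all: by rewrite -?EV -?EE -?Eup -?Elo.
Qed.

Lemma mem_drop_all x s r : x \in drop_all s r -> x \in r.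
Proof. by rewrite mem_filter => /andP[]. Qed.

(* Covers rules (iii)-(vii). *)
Lemma normal_c_weaken (A C : flow) :
  normal_c A ->
  {subset fE C <= fE A} ->
  (forall v, v \in fV C -> weak_kind (lab C v) \/ v \in fV A /\ lab C v = lab A v) ->
  (forall e v, e \in fE C -> up C e = Some v -> weak_kind (lab C v) \/ up A e = Some v) ->
  (forall e w, e \in fE C -> lo C e = Some w -> weak_kind (lab C w) \/ lo A e = Some w) ->
  normal_c C.
Proof.
move=> /normal_cP nA sE sV sUp sLo; apply/normal_cP=> v w e Hv Hw He Ue Le.
have [/c_redex_weakl //|UeA] := sUp e v He Ue.
have [/c_redex_weakr //|LeA] := sLo e w He Le.
have [/c_redex_weakl //|[HvA ->]] := sV v Hv.
have [/c_redex_weakr //|[HwA ->]] := sV w Hw.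
exact: nA HvA HwA (sE e He) UeA LeA.
Qed.

Definition merge_flow (A : flow) (w k e f g h : nat) : flow :=
  Flow (drop_all [:: w; k] (fV A)) (h :: drop_all [:: e; f; g] (fE A)) (lab A)
       (fun x => if x == h then up A f else up A x)
       (fun x => if x == h then lo A g else lo A x).

Lemma normal_c_merge (A : flow) w k e f g h :
  (forall v u, v \in fV A -> u \in fV A -> up A f = Some v -> lo A g = Some u ->
     ~~ c_redex (lab A v) (lab A u)) ->
  normal_c A -> normal_c (merge_flow A w k e f g h).
Proof.
move=> merged /normal_cP nA; apply/normal_cP=> v u x /mem_drop_all Hv /mem_drop_all Hu /=.
rewrite in_cons; case: eqP => [_ _|_ /mem_drop_all]; first exact: merged.
exact: nA.
Qed.

Lemma wstep_raw_normal_c (A B : flow) : wstep_raw A B -> normal_c A -> normal_c B.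
Proof.
case=> [|[|[|[|[|[]]]]]].
- move=> [w [k [e [f [g [h [_ [Hk [_ [Lk [_ [_ [_ [_ [_ [_ [Hg [Ug [_ /normal_c_flow_eq]]]]]]]]]]]]]]]]]]] nB nA.
  apply/nB/normal_c_merge => // v u _ Hu _ Lg.
  apply: contra ((normal_cP A).1 nA k u g Hk Hu Hg Ug Lg) => /c_redex_Ctrl.
  by rewrite Lk.
- move=> [w [k [e [f [g [h [_ [Hk [_ [Lk [_ [_ [_ [Hf [Lf [_ [_ [_ [_ /normal_c_flow_eq]]]]]]]]]]]]]]]]]]] nB nA.
  apply/nB/normal_c_merge => // v u Hv _ Uf _.
  apply: contra ((normal_cP A).1 nA v k f Hv Hk Hf Uf Lf) => /c_redex_Coctrr.
  by rewrite Lk.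
- move=> [w [k [e [f [n [_ [_ [_ [_ [_ [_ [_ [_ [_ [_ [_ /normal_c_flow_eq]]]]]]]]]]]]]]]] nB nA.
  apply/nB/(normal_c_weaken nA) => [x /mem_drop_all //|x|x y _ //|x y _] /=.
  + by rewrite in_cons; case: eqP => [_|_ /mem_drop_all]; [left|right].
  + by right.
  + by case: eqP => [_ [<-]|_]; [left; rewrite eqxx|right].
- move=> [i [k [e [f [n [_ [_ [_ [_ [_ [_ [_ [_ [_ [_ [_ /normal_c_flow_eq]]]]]]]]]]]]]]]] nB nA.
  apply/nB/(normal_c_weaken nA) => [x /mem_drop_all //|x|x y _|x y _] /=.
  + by rewrite in_cons; case: eqP => [_|_ /mem_drop_all]; [left|right].
  + by case: eqP => [_ [<-]|_]; [left; rewrite eqxx|right].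
  + by right.
- move=> [w [k [e [_ [_ [_ [_ [_ [_ [_ /normal_c_flow_eq]]]]]]]]]] nB nA.
  apply/nB/(normal_c_weaken nA) => [x /mem_drop_all //|x /mem_drop_all|x y|x y] /=;
    by right.
- move=> [w [k [e [f [g [n1 [n2 [_ [_ [_ [_ [_ [_ [_ [_ [_ [_ [_ [_ [_ [_ [_ /normal_c_flow_eq]]]]]]]]]]]]]]]]]]]]]] nB nA.
  apply/nB/(normal_c_weaken nA) => [x /mem_drop_all //|x|x y _|x y _] /=.
  + rewrite !in_cons; case: eqP => [_|_]; first by left.
    by case: eqP => [_|_ /mem_drop_all]; [left|right].
  + case: eqP => [_ [<-]|_]; first by left; rewrite eqxx.
    by case: eqP => [_ [<-]|_]; [left; case: eqP; rewrite ?eqxx|right].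
  + by right.
- move=> [w [k [e [f [g [n1 [n2 [_ [_ [_ [_ [_ [_ [_ [_ [_ [_ [_ [_ [_ [_ [_ /normal_c_flow_eq]]]]]]]]]]]]]]]]]]]]]] nB nA.
  apply/nB/(normal_c_weaken nA) => [x /mem_drop_all //|x|x y _|x y _] /=.
  + rewrite !in_cons; case: eqP => [_|_]; first by left.
    by case: eqP => [_|_ /mem_drop_all]; [left|right].
  + by right.
  + case: eqP => [_ [<-]|_]; first by left; rewrite eqxx.
    by case: eqP => [_ [<-]|_]; [left; case: eqP; rewrite ?eqxx|right].
Qed.

Theorem proposition4p19 (A B : flow) :
  is_flow A -> normal_c A -> wstar A B -> normal_c B.
Proof.
move=> _ nA AB; elim: AB nA => [x y [_ _ /wstep_raw_normal_c] //|//|x y z _ IHxy _ IHyz].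
by move=> /IHxy /IHyz.
Qed.
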